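(* Let $\mathcal{G}=\langle S,A,T,s_0,F\rangle$ be a two-player turn-based deterministic reachability game, let $s_1,s_2\in\mathrm{Win}_2(\mathcal{G},F)\setminus F$, and set $Y_1=\{s_1\}$, $Y_2=\{s_2\}$, $Y=Y_1\cup Y_2$. Then $\mathrm{DSWin}_1(\emptyset,Y)$ equals P1's sure winning region in the turn-based game with state set $\mathrm{Win}_2(\mathcal{G}^2_{\emptyset,Y},F)$ and transition function $\widehat T_{\emptyset,Y}$, in which P1's goal is to reach the target set $\mathrm{DSWin}_1(\emptyset,Y_1)\cup\mathrm{DSWin}_1(\emptyset,Y_2)$ and P2's goal is to prevent P1 from reaching it.
   Context: A two-player turn-based deterministic reachability game is a tuple $\mathcal{G}=\langle S,A,T,s_0,F\rangle$: $S$ finite, partitioned into P1 states $S_1$ and P2 states $S_2$; $A=A_1\cup A_2$ (P1 and P2 actions); $T:(S_1\times A_1)\cup(S_2\times A_2)\to S$ deterministic, possibly partial ($a$ enabled at $s$ iff $T(s,a)$ defined; every state has an enabled action); $s_0$ initial; $F\subseteq S$ a set of sink states (P2's goal). For a target $R\subseteq S$: $Z_0=R$, $Z_{k+1}=Z_k\cup\{s\in S_1:T(s,a)\in Z_k\ \forall\text{ enabled }a\}\cup\{s\in S_2:T(s,a)\in Z_k\text{ for some enabled }a\}$; $\mathrm{Win}_2(\mathcal{G},R)=\bigcup_kZ_k$; $\mathrm{rank}_{\mathcal{G},R}(s)=\min\{k:s\in Z_k\}$ ($\infty$ if none). For disjoint $X,Y\subseteq\mathrm{Win}_2(\mathcal{G},F)\setminus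 F$ (traps $X$, fake targets $Y$): the true game $\mathcal{G}^1_{X,Y}$ has states $S$, transitions $T_{X,Y}(q,a)=T(q,a)$ if $q\notin X\cup Y$ and $T_{X,Y}(q,a)=q$ if $q\in X\cup Y$; P2's perceptual game $\mathcal{G}^2_{X,Y}$ has transitions $T$ and goal $F\cup Y$, with $\mathrm{rank}_{\mathcal{G}^2_{X,Y}}:=\mathrm{rank}_{\mathcal{G},F\cup Y}$; $\mathrm{Win}_2(\mathcal{G}^2_{X,Y},F)$ is P2's winning region for target $F$ computed with transitions $T$. Subjectively rationalizable actions: for $q\in S_2\cap\mathrm{Win}_2(\mathcal{G},F)\setminus(F\cup Y)$, $\mathsf{SRActs}_{X,Y}(q)=\{a\text{ enabled}:\mathrm{rank}_{\mathcal{G}^2_{X,Y}}(T(q,a))<\mathrm{rank}_{\mathcal{G}^2_{X,Y}}(q)\}$; at every other state, all enabled actions. $\widehat T_{X,Y}(q,a)=T(q,a)$ if $a\in\mathsf{SRActs}_{X,Y}(q)$, undefined otherwise. A memoryless deterministic strategy of either player is subjectively rationalizable if it picks an action in $\mathsf{SRActs}_{X,Y}(q)$ at each of that player's states $q$. A memoryless deterministic P1 strategy $\pi_1$ is stealthy deceptive sure winning at $s$ if it is subjectively rationalizable and, for every subjectively rationalizable memoryless deterministic P2 strategy $\pi_2$, every path from $s$ generated by $(\pi_1,\pi_2)$ in the true game $\mathcal{G}^1_{X,Y}$ visits $X\cup Y$ within finitely many steps; $\mathrm{DSWin}_1(X,Y)$ is the set of states at which such a strategy exists. P1's sure winning region for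 a target $R'$ in a turn-based game is the set of states from which P1 has a strategy guaranteeing, against every P2 strategy, that every path visits $R'$ within finitely many steps.
   Formalization: P1's sure winning region in the game on $\mathrm{Win}_2(\mathcal{G}^2_{\emptyset,Y},F)$ equals $\mathrm{DSWin}_1(\emptyset,Y)\cap\mathrm{Win}_2(\mathcal{G},F)$ rather than $\mathrm{DSWin}_1(\emptyset,Y)$ itself. The statement above fails without it. *)

From mathcomp Require Import all_boot.
From Stdlib Require Import ClassicalEpsilon.

Set Implicit Arguments.
Unset Strict Implicit.
Unset Printing Implicit Defensive.

Section Game.
(* A turn-based deterministic game: states S (finite), actions A (finite),
   P1 = the set S_1 of player-1 states (S_2 = its complement),
   T : partial deterministic transition function (None = not enabled). *)
Variables (S A : finType) (P1 : {set S}) (T : S -> A -> option S).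

Definition enabled (s : S) (a : A) : bool := T s a != None.

Definition succ_in (Z : {set S}) (s : S) (a : A) : bool :=
  if T s a is Some t then t \in Z else false.

Definition cpre2 (Z : {set S}) : {set S} :=
  [set s | if s \in P1 then [forall a, enabled s a ==> succ_in Z s a]
           else [exists a, succ_in Z s a]].

Fixpoint Zk (R : {set S}) (k : nat) : {set S} :=
  if k is k'.+1 then Zk R k' :|: cpre2 (Zk R k') else R.

Definition Win2 (R : {set S}) (s : S) : Prop := exists k, s \in Zk R k.

(* rank_{G,R}(s) = min {k | s \in Z_k}, None standing for infinity *)
Definition rank (R : {set S}) (s : S) : option nat :=
  match excluded_middle_informative (exists k, s \in Zk R k) with
  | left H => Some (@ex_minn (fun k => s \in Zk R k) H)
  | right _ => None
  end.

Definition rank_lt (x y : option nat) : bool :=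
  match x, y with
  | Some m, Some n => m < n
  | Some _, None => true
  | None, _ => false
  end.

(* a \in SRActs_{X,Y}(q)  (independent of X); F = P2's goal *)
Definition SRActs (F Y : {set S}) (q : S) (a : A) : Prop :=
  enabled q a /\
  ((q \notin P1 /\ Win2 F q /\ q \notin F :|: Y) ->
   match T q a with
   | Some t => rank_lt (rank (F :|: Y) t) (rank (F :|: Y) q)
   | None => false
   end).

(* \hat T_{X,Y} as a transition relation: hatT q a t <-> \hat T(q,a) = t *)
Definition hatT (F Y : {set S}) (q : S) (a : A) (t : S) : Prop :=
  SRActs F Y q a /\ T q a = Some t.

Definition T1 (X Y : {set S}) (q : S) (a : A) : option S :=
  if q \in X :|: Y then (if T q a is Some _ then Some q else None) else T q a.

Definition DSWin (F X Y : {set S}) (s : S) : Prop :=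
  exists pi1 : S -> A,
    (forall q, q \in P1 -> SRActs F Y q (pi1 q)) /\
    forall pi2 : S -> A,
      (forall q, q \notin P1 -> SRActs F Y q (pi2 q)) ->
      forall p : nat -> S,
        p 0 = s ->
        (forall i, T1 X Y (p i)
                      (if p i \in P1 then pi1 (p i) else pi2 (p i))
                   = Some (p i.+1)) ->
        exists i, p i \in X :|: Y.

(* Strategies may depend on the history:
   sigma past q = action chosen at current state q after the states past. *)
Definition legal (St : S -> Prop) (Tr : S -> A -> S -> Prop)
    (own : S -> bool) (sigma : seq S -> S -> A) : Prop :=
  forall past q, St q -> own q -> exists q', Tr q (sigma past q) q' /\ St q'.

Definition SureWin1 (St : S -> Prop) (Tr : S -> A -> S -> Prop)
    (R' : S -> Prop) (s : S) : Prop :=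
  St s /\
  exists sigma1 : seq S -> S -> A,
    legal St Tr (fun q => q \in P1) sigma1 /\
    forall sigma2 : seq S -> S -> A,
      legal St Tr (fun q => q \notin P1) sigma2 ->
      forall p : nat -> S,
        p 0 = s ->
        (forall i,
           let past := [seq p j | j <- iota 0 i] in
           Tr (p i) (if p i \in P1 then sigma1 past (p i) else sigma2 past (p i))
              (p i.+1) /\ St (p i.+1)) ->
        exists i, R' (p i).

End Game.

(* DSWin_1(∅, Y) is P1's attractor [sr_attr Y] to Y in the game where P2 may only play
   subjectively rationalizable actions and F is absorbing: P1 forces Y by staying in the
   attractor, P2 avoids Y forever by staying outside it.  Inside Win_2(G, F), every P1 move
   and every rationalizable P2 move strictly lowers the rank for F ∪ Y, so no play can cycle
   outside F ∪ Y and the attractor strategy reaches Y after finitely many steps.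
   A state outside the attractor has the same rank for F ∪ Y as for F; hence the attractor is
   monotone in Y on Win_2(G, F), and DSWin_1(∅, Y_1) ∪ DSWin_1(∅, Y_2) is a target between
   Y and [sr_attr Y].  The same attractor and avoidance strategies then show that P1's sure
   winning region for that target in the game (Win_2, \hat T) is again [sr_attr Y]. *)

From mathcomp Require Import all_boot.
From Stdlib Require Import ClassicalEpsilon.

Set Implicit Arguments.
Unset Strict Implicit.
Unset Printing Implicit Defensive.

Definition choice_or (X : Type) (P : X -> Prop) (d : X) : X :=
  if excluded_middle_informative (exists x, P x) is left ex
  then proj1_sig (constructive_indefinite_description _ ex) else d.

Lemma choice_orP (X : Type) (P : X -> Prop) d : (exists x, P x) -> P (choice_or P d).
Proof.
rewrite /choice_or; case: excluded_middle_informative => // ex _.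
exact: proj2_sig (constructive_indefinite_description _ ex).
Qed.

Lemma choice_orW (X : Type) (P Q : X -> Prop) d :
  (forall x, P x -> Q x) -> Q d -> Q (choice_or P d).
Proof.
move=> PQ Qd; rewrite /choice_or; case: excluded_middle_informative => // ex.
exact/PQ/(proj2_sig (constructive_indefinite_description _ ex)).
Qed.

Section Attractor.
Context {S A : finType} {P1 : {set S}} {T : S -> A -> option S}.
Implicit Types (R X : {set S}) (x t : S) (a : A).

Local Notation Z := (Zk P1 T).
Local Notation cpre := (cpre2 P1 T).
Local Notation rk := (rank P1 T).

Lemma in_cpre2_P1 X x :
  x \in P1 -> x \in cpre X <-> forall a t, T x a = Some t -> t \in X.
Proof.
move=> xP1; rewrite inE xP1; split.
- by move=> /forallP H a t Hxa; move: (H a); rewrite /enabled /succ_in Hxa.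
- move=> H; apply/forallP => a; apply/implyP; rewrite /enabled /succ_in.
  by case Hxa: (T x a) => [t|] // _; apply: H Hxa.
Qed.

Lemma in_cpre2_P2 X x :
  x \notin P1 -> x \in cpre X <-> exists a t, T x a = Some t /\ t \in X.
Proof.
move=> xP2; rewrite inE (negbTE xP2); split.
- by case/existsP => a; rewrite /succ_in; case Hxa: (T x a) => [t|] // Ht; exists a, t.
- by case=> a [t [Hxa Ht]]; apply/existsP; exists a; rewrite /succ_in Hxa.
Qed.

Lemma cpre2S X X' : X \subset X' -> cpre X \subset cpre X'.
Proof.
move=> /subsetP XX'; apply/subsetP => x; case: (boolP (x \in P1)) => xP.
- by move=> /(in_cpre2_P1 _ xP) H; apply/(in_cpre2_P1 _ xP) => a t /H /XX'.
- move=> /(in_cpre2_P2 _ xP) [a [t [Hxa /XX' Ht]]].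
  by apply/(in_cpre2_P2 _ xP); exists a, t.
Qed.

Lemma ZkS R R' k : R \subset R' -> Z R k \subset Z R' k.
Proof. by move=> RR'; elim: k => //= k IH; rewrite setUSS // cpre2S. Qed.

Lemma Zk_leq R m n : m <= n -> Z R m \subset Z R n.
Proof.
move=> /subnKC <-; elim: (n - m) => [|d IH]; first by rewrite addn0.
by rewrite addnS /=; apply: subset_trans IH (subsetUl _ _).
Qed.

Lemma Zk_shift R R' K n : R \subset Z R' K -> Z R n \subset Z R' (K + n).
Proof.
by move=> RK; elim: n => [|n IH]; rewrite ?addn0 ?addnS //= setUSS // cpre2S.
Qed.

Lemma Zk_ltn R x m n : x \in Z R n -> x \notin Z R m -> m < n.
Proof. by move=> xn; rewrite ltnNge; apply: contra => /Zk_leq/subsetP; apply. Qed.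

Lemma Zk_entry R x k :
  x \in Z R k -> x \notin R -> exists m, x \notin Z R m /\ x \in cpre (Z R m).
Proof.
elim: k => [|k IH] /= xk xR; first by rewrite xk in xR.
case: (boolP (x \in Z R k)) => [/IH/(_ xR)//|xNk].
by exists k; move: xk; rewrite inE (negbTE xNk).
Qed.

Lemma rank_ltP R t x :
  rank_lt (rk R t) (rk R x) <-> exists m, t \in Z R m /\ x \notin Z R m.
Proof.
rewrite /rank; case: excluded_middle_informative => [tfin|tinf]; last first.
  by split=> // -[m [tm _]]; case: tinf; exists m.
case: ex_minnP => mt tmt mt_min.
case: excluded_middle_informative => [xfin|xinf] /=; last first.
  by split=> // _; exists mt; split=> //; apply/negP => xmt; apply: xinf; exists mt.
case: ex_minnP => mx xmx mx_min; split.
- by move=> lt_mx; exists mt; split=> //; apply/negP => /mx_min; rewrite leqNgt lt_mx.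
- by case=> m [tm xNm]; apply: leq_ltn_trans (mt_min _ tm) (Zk_ltn xmx xNm).
Qed.

Lemma rank_lt_Zk R t x n :
  rank_lt (rk R t) (rk R x) -> x \in Z R n.+1 -> t \in Z R n.
Proof.
case/rank_ltP => m [tm xNm] xn.
have mn : m <= n by rewrite -ltnS; apply: Zk_ltn xn xNm.
exact: subsetP (Zk_leq R mn) _ tm.
Qed.

Lemma rank_lt_P1 R x k a t : x \in P1 -> x \in Z R k -> x \notin R ->
  T x a = Some t -> rank_lt (rk R t) (rk R x).
Proof.
move=> xP1 xk xR Hxa; have [m [xNm /(in_cpre2_P1 _ xP1) xm]] := Zk_entry xk xR.
by apply/rank_ltP; exists m; split=> //; apply: xm Hxa.
Qed.

Lemma rank_lt_P2 R x k : x \notin P1 -> x \in Z R k -> x \notin R ->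
  exists a t, T x a = Some t /\ rank_lt (rk R t) (rk R x).
Proof.
move=> xP2 xk xR; have [m [xNm /(in_cpre2_P2 _ xP2) [a [t [Hxa tm]]]]] := Zk_entry xk xR.
by exists a, t; split=> //; apply/rank_ltP; exists m.
Qed.

End Attractor.

Section Plays.
Variables (S A : finType) (T : S -> A -> option S).
Variables (profile : seq S -> S -> A) (s : S).

(* [run n] is the pair (history [p 0; ...; p n.-1], current state p n) of the play in
   which every state is left by the action that [profile] picks for it. *)
Fixpoint run n : seq S * S :=
  if n is n'.+1 then
    let hq := run n' in (rcons hq.1 hq.2, odflt hq.2 (T hq.2 (profile hq.1 hq.2)))
  else ([::], s).

Definition play n := (run n).2.

Lemma run_history n : (run n).1 = [seq play i | i <- iota 0 n].
Proof. by elim: n => // n IH; rewrite -[in RHS]addn1 iotaD map_cat cats1 -IH. Qed.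

Lemma play_inv (Inv : S -> Prop) : Inv s ->
  (forall h q, Inv q -> exists2 t, T q (profile h q) = Some t & Inv t) ->
  forall n, Inv (play n) /\
    T (play n) (profile [seq play i | i <- iota 0 n] (play n)) = Some (play n.+1).
Proof.
move=> Ins step; rewrite -/(play 0) in Ins.
have next n : Inv (play n) ->
    Inv (play n.+1) /\ T (play n) (profile (run n).1 (play n)) = Some (play n.+1).
  move=> Inn; have [t Ht Int] := step (run n).1 _ Inn.
  by rewrite [play n.+1]/play /= -/(play n) Ht.
have Inv_play n : Inv (play n) by elim: n => // n /next [].
by move=> n; rewrite -run_history; have [] := next n (Inv_play n).
Qed.

End Plays.

Section DeceptiveGame.
Variables (S A : finType) (P1 : {set S}) (T : S -> A -> option S) (F : {set S}).
Hypothesis Henabled : forall s, exists a, T s a <> None.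
Hypothesis Hsink : forall f a t, f \in F -> T f a = Some t -> t = f.
Implicit Types (Y : {set S}) (x q t : S) (a : A).

Local Notation Z := (Zk P1 T).
Local Notation W := (Win2 P1 T F).
Local Notation rk := (rank P1 T).
Local Notation SR := (SRActs P1 T F).

Definition some_enabled q : A := proj1_sig (constructive_indefinite_description _ (Henabled q)).

Lemma some_enabledP q : T q (some_enabled q) <> None.
Proof. exact: proj2_sig (constructive_indefinite_description _ (Henabled q)). Qed.

Lemma Win2_succ_P1 x a t : W x -> x \in P1 -> T x a = Some t -> W t.
Proof.
move=> [k xk] xP1 Hxa; case: (boolP (x \in F)) => xF; first by rewrite (Hsink xF Hxa); exists k.
by case/rank_ltP: (rank_lt_P1 xP1 xk xF Hxa) => m [tm _]; exists m.
Qed.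

Lemma SRActs_enabled Y q a : SR Y q a -> T q a <> None.
Proof. by case=> /eqP. Qed.

Lemma SRActs_free Y q a :
  ~ (q \notin P1 /\ W q /\ q \notin F :|: Y) -> T q a <> None -> SR Y q a.
Proof. by move=> free /eqP en; split=> // /free. Qed.

Lemma SRActs_P1 Y q a : q \in P1 -> T q a <> None -> SR Y q a.
Proof. by move=> qP1; apply: SRActs_free => -[]; rewrite qP1. Qed.

Lemma SRActs_P2 Y q a t : q \notin P1 -> W q -> q \notin F :|: Y -> T q a = Some t ->
  SR Y q a <-> rank_lt (rk (F :|: Y) t) (rk (F :|: Y) q).
Proof.
move=> qP2 Wq qFY Hqa; split; first by case=> _ /(_ (conj qP2 (conj Wq qFY))); rewrite Hqa.
by move=> lt_tq; split; [rewrite /enabled Hqa | rewrite Hqa].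
Qed.

(* States of F are absorbing, so they enter the attractor only as targets. *)
Inductive sr_attr Y : S -> Prop :=
| sr_attr_target x : x \in Y -> sr_attr Y x
| sr_attr_P1 x a t : x \in P1 -> x \notin F -> T x a = Some t -> sr_attr Y t ->
    sr_attr Y x
| sr_attr_P2 x : x \notin P1 -> x \notin F ->
    (forall a t, SR Y x a -> T x a = Some t -> sr_attr Y t) -> sr_attr Y x.

Lemma sr_attr_notF Y x : sr_attr Y x -> x \notin Y -> x \notin F.
Proof. by case=> // y yY; rewrite yY. Qed.

Lemma sr_attr_P1_succ Y x : sr_attr Y x -> x \notin Y -> x \in P1 ->
  exists a t, T x a = Some t /\ sr_attr Y t.
Proof.
case=> [y ->//|y a t _ _ Hya Ht _ _|y yP2 _ _ _ yP1]; first by exists a, t.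
by rewrite yP1 in yP2.
Qed.

Lemma sr_attr_P2_succ Y x a t : sr_attr Y x -> x \notin Y -> x \notin P1 ->
  SR Y x a -> T x a = Some t -> sr_attr Y t.
Proof.
case=> [y ->//|y b u yP1 _ _ _ _ yP2|y _ _ succ _ _]; last exact: succ.
by rewrite yP1 in yP2.
Qed.

Lemma not_sr_attr_notY Y x : ~ sr_attr Y x -> x \notin Y.
Proof. by move=> Nx; apply/negP => /sr_attr_target. Qed.

Lemma not_sr_attr_P1 Y x a t : ~ sr_attr Y x -> x \in P1 -> T x a = Some t ->
  ~ sr_attr Y t.
Proof.
move=> Nx xP1 Hxa; case: (boolP (x \in F)) => [xF|xNF]; first by rewrite (Hsink xF Hxa).
by move=> /(sr_attr_P1 xP1 xNF Hxa).
Qed.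

Lemma not_sr_attr_P2 Y x : ~ sr_attr Y x -> x \notin P1 ->
  exists a t, SR Y x a /\ T x a = Some t /\ ~ sr_attr Y t.
Proof.
move=> Nx xP2; case: (boolP (x \in F)) => [xF|xNF].
  have [a en] := Henabled x; case Hxa: (T x a) => [t|] //.
  have tx := Hsink xF Hxa; subst t; exists a, x; split=> //.
  by apply: (SRActs_free _ en) => -[_ [_]]; rewrite in_setU xF.
apply: NNPP => Nex; apply: Nx; apply: sr_attr_P2 => // a t SRa Hxa.
by apply: NNPP => Nt; apply: Nex; exists a, t.
Qed.

Definition attr_strategy Y q : A :=
  choice_or (fun a => exists t, T q a = Some t /\ sr_attr Y t) (some_enabled q).

Lemma attr_strategy_enabled Y q : T q (attr_strategy Y q) <> None.
Proof.
rewrite /attr_strategy.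
by apply: (@choice_orW _ _ (fun a => T q a <> None) _ _ (@some_enabledP q)) => a [t [-> _]].
Qed.

Lemma attr_strategy_stays Y q : q \in P1 -> sr_attr Y q -> q \notin Y ->
  exists t, T q (attr_strategy Y q) = Some t /\ sr_attr Y t.
Proof.
move=> qP1 attrq qY.
apply: (choice_orP (P := fun a => exists t, T q a = Some t /\ sr_attr Y t)).
exact: sr_attr_P1_succ.
Qed.

(* The [W q -> W t] conjunct makes the spoiler legal in the game played on Win_2. *)
Definition safe_sr_act Y q a := SR Y q a /\ exists t, T q a = Some t /\ (W q -> W t).

Definition spoiler Y q : A :=
  choice_or (fun a => safe_sr_act Y q a /\ exists t, T q a = Some t /\ ~ sr_attr Y t)
    (choice_or (safe_sr_act Y q) (some_enabled q)).

Section FakeTargets.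
Variables (Y : {set S}) (K : nat).
Hypothesis YK : Y \subset Z F K.

Lemma Zk_FY_Win2 x n : x \in Z (F :|: Y) n -> W x.
Proof.
move=> xn; exists (K + n); apply: subsetP (Zk_shift n _) _ xn.
by rewrite subUset YK andbT; apply: Zk_leq (leq0n K).
Qed.

Lemma Win2_Zk_FY x : W x -> exists n, x \in Z (F :|: Y) n.
Proof. by case=> n xn; exists n; apply: subsetP (ZkS n (subsetUl F Y)) _ xn. Qed.

Lemma SRActs_rank_lt x a t : W x -> x \notin F :|: Y -> SR Y x a -> T x a = Some t ->
  rank_lt (rk (F :|: Y) t) (rk (F :|: Y) x).
Proof.
move=> Wx xFY SRa Hxa; case: (boolP (x \in P1)) => xP1.
  by have [k xk] := Win2_Zk_FY Wx; apply: rank_lt_P1 xP1 xk xFY Hxa.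
exact/(SRActs_P2 xP1 Wx xFY Hxa).
Qed.

Lemma SRActs_Win2 x a t : W x -> x \notin Y -> SR Y x a -> T x a = Some t -> W t.
Proof.
move=> Wx xY SRa Hxa; case: (boolP (x \in F)) => xF; first by rewrite (Hsink xF Hxa).
have xFY : x \notin F :|: Y by rewrite inE negb_or xF.
by case/rank_ltP: (SRActs_rank_lt Wx xFY SRa Hxa) => m [/Zk_FY_Win2].
Qed.

Lemma safe_sr_act_exists q : q \notin P1 -> exists a, safe_sr_act Y q a.
Proof.
move=> qP2; have [a en] := Henabled q; case Hqa: (T q a) => [u|] //.
have [Wq|NWq] := classic (W q); last first.
  by exists a; split; [apply: (SRActs_free _ en) => -[_ []] | exists u].
case: (boolP (q \in F :|: Y)) => qFY; last first.
  have [k qk] := Win2_Zk_FY Wq; have [b [t [Hqb lt_tq]]] := rank_lt_P2 qP2 qk qFY.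
  exists b; split; first exact/(SRActs_P2 qP2 Wq qFY Hqb).
  by exists t; split=> // _; case/rank_ltP: lt_tq => m [/Zk_FY_Win2].
have free b : T q b <> None -> SR Y q b by apply: SRActs_free => -[_ [_]]; rewrite qFY.
case: (boolP (q \in F)) => qF.
  by exists a; split; [exact: free | exists q; rewrite -{2}(Hsink qF Hqa)].
have [k qk] := Wq; have [b [t [Hqb lt_tq]]] := rank_lt_P2 qP2 qk qF.
exists b; split; first by apply: free; rewrite Hqb.
by exists t; split=> // _; case/rank_ltP: lt_tq => m [tm _]; exists m.
Qed.

Lemma spoiler_legal q : q \notin P1 -> safe_sr_act Y q (spoiler Y q).
Proof.
move=> qP2; apply: choice_orW => [a []//|].
by apply: choice_orP; apply: safe_sr_act_exists.
Qed.

Lemma spoiler_avoids q : q \notin P1 -> ~ sr_attr Y q ->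
  exists t, T q (spoiler Y q) = Some t /\ (W q -> W t) /\ ~ sr_attr Y t.
Proof.
move=> qP2 Nq; have [a [t [SRa [Hqa Nt]]]] := not_sr_attr_P2 Nq qP2.
have Wt : W q -> W t by move=> Wq; apply: SRActs_Win2 Wq (not_sr_attr_notY Nq) SRa Hqa.
have [[_ [u [Hu Wu]]] [u' [Hu' Nu']]] :
    safe_sr_act Y q (spoiler Y q) /\ exists t, T q (spoiler Y q) = Some t /\ ~ sr_attr Y t.
  apply: (choice_orP (P := fun b =>
    safe_sr_act Y q b /\ exists t, T q b = Some t /\ ~ sr_attr Y t)).
  by exists a; split; [split=> //; exists t | exists t].
by move: Hu' Nu'; rewrite Hu => -[<-] Nu; exists u.
Qed.

Lemma sr_play_reaches (Inv : S -> Prop) (p : nat -> S) n :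
  p 0 \in Z (F :|: Y) n -> Inv (p 0) ->
  (forall i, Inv (p i) -> p i \notin F :|: Y ->
     Inv (p i.+1) /\ exists a, SR Y (p i) a /\ T (p i) a = Some (p i.+1)) ->
  exists i, Inv (p i) /\ p i \in F :|: Y.
Proof.
elim: n p => [|n IH] p p0n Inv0 step; first by exists 0.
case: (boolP (p 0 \in F :|: Y)) => p0FY; first by exists 0.
have [Inv1 [a [SRa Hp0a]]] := step 0 Inv0 p0FY.
have p1n := rank_lt_Zk (SRActs_rank_lt (Zk_FY_Win2 p0n) p0FY SRa Hp0a) p0n.
by have [i] := IH (fun i => p i.+1) p1n Inv1 (fun i => step i.+1); exists i.+1.
Qed.

Lemma attr_play_reaches (p : nat -> S) : W (p 0) -> sr_attr Y (p 0) ->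
  (forall i, p i \notin Y -> exists a, [/\ SR Y (p i) a, T (p i) a = Some (p i.+1)
                                        & p i \in P1 -> a = attr_strategy Y (p i)]) ->
  exists i, p i \in Y.
Proof.
move=> W0 attr0 step; have [n p0n] := Win2_Zk_FY W0.
have [i [attri]] : exists i, sr_attr Y (p i) /\ p i \in F :|: Y.
  apply: sr_play_reaches p0n attr0 _ => i attri.
  rewrite in_setU negb_or => /andP[_ piY]; have [a [SRa Hpia strat]] := step i piY.
  split; last by exists a.
  case: (boolP (p i \in P1)) => piP1; last exact: sr_attr_P2_succ attri piY piP1 SRa Hpia.
  have [t []] := attr_strategy_stays piP1 attri piY.
  by rewrite -(strat piP1) Hpia => -[->].
rewrite in_setU; case: (boolP (p i \in Y)) => piY; first by exists i.
by rewrite (negbTE (sr_attr_notF attri piY)).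
Qed.

Lemma sr_attr_DSWin s : sr_attr Y s -> W s -> DSWin P1 T F set0 Y s.
Proof.
move=> attrs Ws; exists (attr_strategy Y); split.
  by move=> q qP1; apply: SRActs_P1 qP1 (attr_strategy_enabled (Y := Y) (q := q)).
move=> pi2 pi2SR p p0 step.
have [i piY] : exists i, p i \in Y.
  apply: attr_play_reaches; rewrite ?p0 // => i piY.
  exists (if p i \in P1 then attr_strategy Y (p i) else pi2 (p i)).
  move: (step i); rewrite /T1 set0U (negbTE piY).
  case: ifP => [piP1|/negbT /pi2SR SRi] Hi; split=> //.
  exact: SRActs_P1 piP1 (attr_strategy_enabled (Y := Y) (q := p i)).
by exists i; rewrite set0U.
Qed.

Lemma DSWin_target y : y \in Y -> DSWin P1 T F set0 Y y.
Proof.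
move=> yY; apply: sr_attr_DSWin; first exact: sr_attr_target.
by exists K; apply: subsetP YK _ yY.
Qed.

Lemma DSWin_sr_attr s : DSWin P1 T F set0 Y s -> sr_attr Y s.
Proof.
case=> pi1 [pi1SR win]; apply: NNPP => Ns.
pose profile (_ : seq S) q := if q \in P1 then pi1 q else spoiler Y q.
have step h q : ~ sr_attr Y q -> exists2 t, T q (profile h q) = Some t & ~ sr_attr Y t.
  rewrite /profile; case: ifP => [qP1|/negbT qP2] Nq; last first.
    by have [t [Ht [_ Nt]]] := spoiler_avoids qP2 Nq; exists t.
  case Ht: (T q (pi1 q)) (SRActs_enabled (pi1SR q qP1)) => [t|] // _.
  by exists t => //; apply: not_sr_attr_P1 Nq qP1 Ht.
have inv := play_inv (Inv := fun q => ~ sr_attr Y q) Ns step.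
have [i] : exists i, play T profile s i \in set0 :|: Y.
  apply: (win (spoiler Y) (fun q qP2 => (spoiler_legal qP2).1)) => // i.
  have [Ni Hi] := inv i.
  by rewrite /T1 set0U (negbTE (not_sr_attr_notY Ni)).
by rewrite set0U => /sr_attr_target; apply: (inv i).1.
Qed.

Lemma sr_attr_SureWin1 (R' : S -> Prop) s : (forall q, q \in Y -> R' q) ->
  sr_attr Y s -> W s -> SureWin1 P1 W (hatT P1 T F Y) R' s.
Proof.
move=> YR' attrs Ws; split=> //; exists (fun _ q => attr_strategy Y q); split.
  move=> _ q Wq qP1.
  case Ht: (T q (attr_strategy Y q)) (attr_strategy_enabled (Y := Y) (q := q)) => [t|] // en.
  exists t; split; last exact: Win2_succ_P1 Wq qP1 Ht.
  by split=> //; apply: SRActs_P1 qP1 _; rewrite Ht.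
move=> sigma2 _ p p0 step.
have [i piY] : exists i, p i \in Y.
  apply: attr_play_reaches; rewrite ?p0 // => i _.
  have [[SRi Hi] _] := step i.
  by eexists; split; [exact: SRi | exact: Hi | move=> ->].
by exists i; apply: YR'.
Qed.

Lemma SureWin1_sr_attr (R' : S -> Prop) s : (forall q, R' q -> W q -> sr_attr Y q) ->
  SureWin1 P1 W (hatT P1 T F Y) R' s -> sr_attr Y s.
Proof.
move=> R'attr [Ws [sigma1 [legal1 win]]]; apply: NNPP => Ns.
pose sigma2 (_ : seq S) q := spoiler Y q.
have legal2 : legal W (hatT P1 T F Y) (fun q => q \notin P1) sigma2.
  move=> h q Wq qP2; have [SRq [t [Ht Wt]]] := spoiler_legal qP2.
  by exists t; split; [split | apply: Wt].
pose profile h q := if q \in P1 then sigma1 h q else sigma2 h q.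
have step h q : ~ sr_attr Y q /\ W q ->
    exists2 t, T q (profile h q) = Some t & ~ sr_attr Y t /\ W t.
  case=> Nq Wq; rewrite /profile; case: ifP => [qP1|/negbT qP2].
    have [t [[_ Ht] Wt]] := legal1 h q Wq qP1.
    by exists t => //; split=> //; apply: not_sr_attr_P1 Nq qP1 Ht.
  by have [t [Ht [Wt Nt]]] := spoiler_avoids qP2 Nq; exists t => //; split=> //; apply: Wt.
have inv := play_inv (Inv := fun q => ~ sr_attr Y q /\ W q) (conj Ns Ws) step.
have [i R'i] : exists i, R' (play T profile s i).
  apply: (win sigma2 legal2) => // i; have [[_ Wi] Hi] := inv i; have [[_ Wi1] _] := inv i.+1.
  split=> //; split=> //; rewrite /profile in Hi *; case: ifP => [piP1|/negbT piP2].
    by have [t [[]]] := legal1 [seq play T profile s j | j <- iota 0 i] _ Wi piP1.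
  exact: (spoiler_legal piP2).1.
by have [[Ni Wi] _] := inv i; apply: Ni (R'attr _ R'i Wi).
Qed.

Lemma not_sr_attr_Zk t n : t \in Z (F :|: Y) n -> ~ sr_attr Y t -> t \in Z F n.
Proof.
elim: n t => [|n IH] t tn Nt.
  by move: tn; rewrite /= in_setU (negbTE (not_sr_attr_notY Nt)) orbF.
case: (boolP (t \in F)) => tF; first exact: subsetP (Zk_leq F (leq0n n.+1)) _ tF.
have tFY : t \notin F :|: Y by rewrite in_setU negb_or tF not_sr_attr_notY.
have down a u : SR Y t a -> T t a = Some u -> u \in Z (F :|: Y) n.
  by move=> SRa Hta; apply: rank_lt_Zk (SRActs_rank_lt (Zk_FY_Win2 tn) tFY SRa Hta) tn.
apply/setUP; right; case: (boolP (t \in P1)) => tP1.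
  apply/(in_cpre2_P1 _ tP1) => a u Hta.
  have SRa : SR Y t a by apply: SRActs_P1 tP1 _; rewrite Hta.
  exact: IH (down _ _ SRa Hta) (not_sr_attr_P1 Nt tP1 Hta).
have [a [u [SRa [Hta Nu]]]] := not_sr_attr_P2 Nt tP1.
by apply/(in_cpre2_P2 _ tP1); exists a, u; split=> //; apply: IH (down _ _ SRa Hta) Nu.
Qed.

Lemma sr_attr_subset Y' x : Y' \subset Y -> sr_attr Y' x -> W x -> sr_attr Y x.
Proof.
move=> Y'Y; elim=> {x} [x xY'|x a t xP1 xF Hxa _ IH|x xP2 xF _ IH] Wx.
- by apply: sr_attr_target; apply: subsetP Y'Y _ xY'.
- exact: sr_attr_P1 xP1 xF Hxa (IH (Win2_succ_P1 Wx xP1 Hxa)).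
case: (boolP (x \in Y)) => xY; first exact: sr_attr_target.
apply: sr_attr_P2 => // a t SRa Hxa; apply: NNPP => Nt.
have xFY : x \notin F :|: Y by rewrite in_setU negb_or xF.
have xFY' : x \notin F :|: Y'.
  by rewrite in_setU negb_or xF; apply: contra xY; apply: subsetP.
case/(SRActs_P2 xP2 Wx xFY Hxa)/rank_ltP: SRa => m [tm xm].
suff SRa' : SR Y' x a by apply: Nt (IH a t SRa' Hxa (Zk_FY_Win2 tm)).
apply/(SRActs_P2 xP2 Wx xFY' Hxa)/rank_ltP; exists m; split.
  exact: subsetP (ZkS m (subsetUl F Y')) _ (not_sr_attr_Zk tm Nt).
by apply: contra xm; apply: subsetP (ZkS m (setUS F Y'Y)) _.
Qed.

End FakeTargets.

Lemma DSWin_sr_attr_subset Y Y' K q : Y \subset Z F K -> Y' \subset Y ->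
  DSWin P1 T F set0 Y' q -> W q -> sr_attr Y q.
Proof.
move=> YK Y'Y /(DSWin_sr_attr (subset_trans Y'Y YK)).
exact: (sr_attr_subset YK Y'Y).
Qed.

End DeceptiveGame.

Theorem proposition3 (S A : finType) (P1 : {set S}) (T : S -> A -> option S)
  (s0 : S) (F : {set S})
  (Henabled : forall s, exists a, T s a <> None)
  (Hsink : forall f a t, f \in F -> T f a = Some t -> t = f)
  (s1 s2 : S)
  (Hs1 : Win2 P1 T F s1) (Hs1F : s1 \notin F)
  (Hs2 : Win2 P1 T F s2) (Hs2F : s2 \notin F) :
  let Y1 := [set s1] in
  let Y2 := [set s2] in
  let Y := Y1 :|: Y2 in
  forall s : S,
    (Win2 P1 T F s /\ DSWin P1 T F set0 Y s) <->
    SureWin1 P1 (Win2 P1 T F) (hatT P1 T F Y)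
      (fun q => DSWin P1 T F set0 Y1 q \/ DSWin P1 T F set0 Y2 q) s.
Proof.
move=> Y1 Y2 Y s; have [k1 s1k1] := Hs1; have [k2 s2k2] := Hs2.
have YK : Y \subset Zk P1 T F (maxn k1 k2).
  rewrite subUset !sub1set (subsetP (Zk_leq F (leq_maxl k1 k2)) _ s1k1).
  exact: subsetP (Zk_leq F (leq_maxr k1 k2)) _ s2k2.
have Y1K := subset_trans (subsetUl Y1 Y2) YK.
have Y2K := subset_trans (subsetUr Y1 Y2) YK.
split=> [[Ws /(DSWin_sr_attr Henabled Hsink YK) attrs]|win].
  apply: (sr_attr_SureWin1 Henabled Hsink YK _ attrs Ws) => q /setUP[qY|qY].
    left; exact: (DSWin_target Henabled Y1K qY).
  right; exact: (DSWin_target Henabled Y2K qY).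
have Ws := win.1; split=> //; apply: (sr_attr_DSWin Henabled YK _ Ws).
apply: (SureWin1_sr_attr Henabled Hsink YK _ win) => q [Dq|Dq].
  exact: (DSWin_sr_attr_subset Henabled Hsink YK (subsetUl Y1 Y2) Dq).
exact: (DSWin_sr_attr_subset Henabled Hsink YK (subsetUr Y1 Y2) Dq).
Qed.
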